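(* Consider the continuous-time Markov process on $\mathbb N_0=\{0,1,2,\dots\}$ with rates $q(0,1)=1$, and for $x\ge1$: $q(x,x+1)=\frac{2x+1}{4x}$, $q(x,x-1)=1-\frac{2x+1}{4x}$, all other rates $0$. Consider the $2$-leg spider walk with local configurations $L(x)=\{(x,x+1),(x,x+2)\}$, $x\in\mathbb N_0$, i.e. the process on $\{(x,x+1),(x,x+2):x\ge0\}$ in which a leg at $y$ jumps to $y\pm1$ at rate $q(y,y\pm1)$ provided the resulting configuration is again of this form (legs distinct, at distance at most $2$, inside $\mathbb N_0$). Then the Markov process is recurrent whereas the spider walk is transient.
   Context: A continuous-time Markov process is called recurrent/transient if its jump chain, with transition probabilities $p(x,y)=q(x,y)/\sum_{z\ne x}q(x,z)$ for $y\ne x$, is recurrent/transient. *)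

From Stdlib Require Export Reals List Arith Bool.
Export ListNotations.
Open Scope R_scope.

(* A continuous-time Markov process with finite range is given by, for each
   state x, the list of its possible jumps (y, q(x,y)) with y <> x, pairwise
   distinct targets y, all other rates being 0. *)

Definition total_rate {T : Type} (rates : T -> list (T * R)) (x : T) : R :=
  fold_right (fun e acc => snd e + acc) 0 (rates x).

Definition rate_to {T : Type} (eqb : T -> T -> bool)
  (rates : T -> list (T * R)) (x y : T) : R :=
  fold_right (fun e acc => (if eqb (fst e) y then snd e else 0) + acc) 0 (rates x).

Definition jump_prob {T : Type} (eqb : T -> T -> bool)
  (rates : T -> list (T * R)) (x y : T) : R :=
  rate_to eqb rates x y / total_rate rates x.

(* first_passage n x y = P_x(jump chain first hits y at time n), n >= 1
   (time 0 is not counted, so for x = y this is the first-return probability). *)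
Fixpoint first_passage {T : Type} (eqb : T -> T -> bool)
  (rates : T -> list (T * R)) (n : nat) (x y : T) : R :=
  match n with
  | O => 0
  | S m =>
    match m with
    | O => jump_prob eqb rates x y
    | S _ =>
      fold_right
        (fun z acc =>
           (if eqb z y then 0
            else jump_prob eqb rates x z * first_passage eqb rates m z y) + acc)
        0 (map fst (rates x))
    end
  end.

Definition recurrent_state {T : Type} (eqb : T -> T -> bool)
  (rates : T -> list (T * R)) (x : T) : Prop :=
  infinite_sum (fun n => first_passage eqb rates (S n) x x) 1.

Definition transient_state {T : Type} (eqb : T -> T -> bool)
  (rates : T -> list (T * R)) (x : T) : Prop :=
  exists l, l < 1 /\ infinite_sum (fun n => first_passage eqb rates (S n) x x) l.

Definition ctmc_rates {T : Type} (q : T -> T -> R) (nb : T -> list T) (x : T)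
  : list (T * R) := map (fun y => (y, q x y)) (nb x).

Definition bd_q (x y : nat) : R :=
  match x with
  | O => if Nat.eqb y 1 then 1 else 0
  | S _ =>
    if Nat.eqb y (x + 1) then (2 * INR x + 1) / (4 * INR x)
    else if Nat.eqb y (x - 1) then 1 - (2 * INR x + 1) / (4 * INR x)
    else 0
  end.

Definition bd_nb (x : nat) : list nat :=
  match x with
  | O => [1%nat]
  | S k => [S (S k); k]
  end.

(* a configuration (a,b) (legs at a < b) is admissible iff it is in some L(x) *)
Definition spider_conf_b (c : nat * nat) : bool :=
  let (a, b) := c in Nat.eqb b (S a) || Nat.eqb b (S (S a)).

Definition spider_cands (q : nat -> nat -> R) (c : nat * nat) : list ((nat * nat) * R) :=
  let (a, b) := c in
  (match a with O => [] | S a' => [((a', b), q a a')] end)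
  ++ [((S a, b), q a (S a))]
  ++ (match b with O => [] | S b' => [((a, b'), q b b')] end)
  ++ [((a, S b), q b (S b))].

Definition spider_rates (q : nat -> nat -> R) (c : nat * nat) : list ((nat * nat) * R) :=
  filter (fun e => spider_conf_b (fst e)) (spider_cands q c).

Definition pair_eqb (c d : nat * nat) : bool :=
  Nat.eqb (fst c) (fst d) && Nat.eqb (snd c) (snd d).

From Stdlib Require Import Reals Lra Lia Psatz FunctionalExtensionality.
Open Scope R_scope.

(* Both jump chains of the theorem are nearest-neighbour chains on N in
   disguise: the birth-death process trivially, and the spider walk after
   enumerating its configurations as (0,1), (0,2), (1,2), (1,3), (2,3), ...,
   a configuration having exactly the previous and the next one as
   neighbours.  For a nearest-neighbour chain with up-probabilities p the
   probability of hitting j within n steps is the n-th iterate of an explicit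
   one-step operator [hit_step]; these iterates increase to a fixed point of
   the operator, and the return probability to j is its value at j.

   - Recurrence (birth-death process, p_i = (2i+1)/(4i)): the fixed point,
     set to 1 at j, is harmonic off j; it is constant below j, and above j
     its increments are proportional to 1/(2i+1), whose sum diverges, so a
     bounded harmonic function is constant and the return probability is 1.
   - Transience (spider walk): the profile (j+2)/(i+2) beyond j is excessive
     under a drift condition satisfied by the spider's up-probabilities, so
     it dominates all iterates and bounds the return probability below 1. *)

Definition with_target (j : nat) (g : nat -> R) (k : nat) : R :=
  if Nat.eqb k j then 1 else g k.

Definition hit_step (p : nat -> R) (j : nat) (g : nat -> R) (i : nat) : R :=
  match i with
  | O => with_target j g 1
  | S k => p i * with_target j g (S i) + (1 - p i) * with_target j g k
  end.

(* Probability, started at i, of visiting j at one of the times 1, ..., n. *)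
Definition hit_within (p : nat -> R) (j n : nat) : nat -> R :=
  Nat.iter n (hit_step p j) (fun _ => 0).

Lemma cv_const (c : R) : Un_cv (fun _ => c) c.
Proof. intros e He; exists O; intros; unfold Rdist; rewrite Rminus_diag, Rabs_R0; lra. Qed.

Lemma cv_succ (u : nat -> R) (l : R) : Un_cv u l -> Un_cv (fun n => u (S n)) l.
Proof.
  intros Hu; apply (Un_cv_ext (fun n => u (n + 1)%nat)).
  - intros n; rewrite Nat.add_1_r; reflexivity.
  - apply CV_shift'; exact Hu.
Qed.

Lemma with_target_fixed (j : nat) (g : nat -> R) (k : nat) :
  g j = 1 -> with_target j g k = g k.
Proof. intros Hj; unfold with_target; destruct (Nat.eqb_spec k j); subst; auto. Qed.

Lemma with_target_off (j : nat) (g : nat -> R) (k : nat) :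
  k <> j -> with_target j g k = g k.
Proof. intros Hk; unfold with_target; apply Nat.eqb_neq in Hk; rewrite Hk; reflexivity. Qed.

Section HittingProbabilities.

Variables (p : nat -> R) (j : nat).
Hypothesis p_prob : forall k, 0 <= p (S k) <= 1.

Lemma hit_step_mono (g h : nat -> R) (i : nat) :
  (forall k, g k <= h k) -> hit_step p j g i <= hit_step p j h i.
Proof.
  intros Hgh.
  assert (Hw : forall k, with_target j g k <= with_target j h k).
  { intros k; unfold with_target; destruct (Nat.eqb k j); [lra | apply Hgh]. }
  destruct i as [|k]; cbn [hit_step]; [apply Hw|].
  pose proof (p_prob k).
  apply Rplus_le_compat; apply Rmult_le_compat_l; auto; lra.
Qed.

Lemma hit_step_bounds (g : nat -> R) (i : nat) :
  (forall k, 0 <= g k <= 1) -> 0 <= hit_step p j g i <= 1.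
Proof.
  intros Hg.
  assert (Hw : forall k, 0 <= with_target j g k <= 1).
  { intros k; unfold with_target; destruct (Nat.eqb k j); [lra | apply Hg]. }
  destruct i as [|k]; cbn [hit_step]; [apply Hw|].
  pose proof (p_prob k); pose proof (Hw (S (S k))); pose proof (Hw k); nra.
Qed.

Lemma hit_step_ext (g h : nat -> R) (i : nat) :
  (forall k, k <> j -> g k = h k) -> hit_step p j g i = hit_step p j h i.
Proof.
  intros Hgh.
  assert (Hw : forall k, with_target j g k = with_target j h k).
  { intros k; unfold with_target; destruct (Nat.eqb_spec k j); auto. }
  destruct i; cbn [hit_step]; rewrite ?Hw; reflexivity.
Qed.

Lemma hit_step_ones (g : nat -> R) (i : nat) :
  (forall k, (k <= S i)%nat -> g k = 1) -> hit_step p j g i = 1.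
Proof.
  intros Hg.
  assert (Hw : forall k, (k <= S i)%nat -> with_target j g k = 1).
  { intros k Hk; unfold with_target; destruct (Nat.eqb k j); auto. }
  destruct i as [|k]; cbn [hit_step]; [apply Hw; lia|].
  rewrite !Hw by lia; ring.
Qed.

Lemma hit_within_S (n : nat) :
  hit_within p j (S n) = hit_step p j (hit_within p j n).
Proof. reflexivity. Qed.

Lemma hit_within_bounds (n i : nat) : 0 <= hit_within p j n i <= 1.
Proof.
  revert i; induction n as [|n IH]; intros i.
  - simpl; lra.
  - rewrite hit_within_S; apply hit_step_bounds; exact IH.
Qed.

Lemma hit_within_increasing (n i : nat) : hit_within p j n i <= hit_within p j (S n) i.
Proof.
  revert i; induction n as [|n IH]; intros i.
  - apply hit_within_bounds.
  - apply (hit_step_mono (hit_within p j n) (hit_within p j (S n))); exact IH.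
Qed.

Lemma excessive_bound (h : nat -> R) :
  (forall i, 0 <= h i) -> (forall i, i <> j -> hit_step p j h i <= h i) ->
  forall n, hit_within p j n j <= hit_step p j h j.
Proof.
  intros h_nonneg h_excessive.
  set (B := fun i => if Nat.eqb i j then hit_step p j h j else h i).
  assert (step_B : forall i, hit_step p j B i = hit_step p j h i).
  { intros i; apply hit_step_ext; intros k Hk; unfold B.
    apply Nat.eqb_neq in Hk; rewrite Hk; reflexivity. }
  assert (below_B : forall n i, hit_within p j n i <= B i).
  { induction n as [|n IH]; intros i.
    - unfold B; simpl; destruct (Nat.eqb i j); [|apply h_nonneg].
      apply Rle_trans with (hit_step p j (fun _ => 0) j).
      + apply (hit_step_bounds (fun _ => 0)); intros; lra.
      + apply hit_step_mono; exact h_nonneg.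
    - rewrite hit_within_S.
      apply Rle_trans with (hit_step p j B i); [apply hit_step_mono; exact IH|].
      rewrite step_B; unfold B; destruct (Nat.eqb_spec i j); [subst; lra|].
      apply h_excessive; assumption. }
  intros n; specialize (below_B n j); unfold B in below_B.
  rewrite Nat.eqb_refl in below_B; exact below_B.
Qed.

Lemma hit_step_continuous (f : nat -> nat -> R) (L : nat -> R) (i : nat) :
  (forall k, Un_cv (fun n => f n k) (L k)) ->
  Un_cv (fun n => hit_step p j (f n) i) (hit_step p j L i).
Proof.
  intros Hf.
  assert (Hw : forall k, Un_cv (fun n => with_target j (f n) k) (with_target j L k)).
  { intros k; unfold with_target; destruct (Nat.eqb k j); [apply cv_const | apply Hf]. }
  destruct i; cbn [hit_step]; [apply Hw|].
  apply CV_plus; apply CV_mult; auto using cv_const.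
Qed.

Lemma hit_limit :
  exists L : nat -> R, (forall i, Un_cv (fun n => hit_within p j n i) (L i)) /\
    (forall i, 0 <= L i <= 1) /\ (forall i, L i = hit_step p j L i).
Proof.
  assert (Hcv : forall i, {l | Un_cv (fun n => hit_within p j n i) l}).
  { intros i; apply growing_cv.
    - intros n; apply hit_within_increasing.
    - exists 1; intros x [n ->]; apply hit_within_bounds. }
  exists (fun i => proj1_sig (Hcv i)).
  assert (HL : forall i, Un_cv (fun n => hit_within p j n i) (proj1_sig (Hcv i))).
  { intros i; exact (proj2_sig (Hcv i)). }
  split; [exact HL | split].
  - intros i; split.
    + apply (@Rle_cv_lim (fun _ => 0) (fun n => hit_within p j n i));
        auto using cv_const; intros; apply hit_within_bounds.
    + apply (@Rle_cv_lim (fun n => hit_within p j n i) (fun _ => 1));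
        auto using cv_const; intros; apply hit_within_bounds.
  - intros i; apply (UL_sequence (fun n => hit_within p j (S n) i)).
    + apply (cv_succ (fun n => hit_within p j n i)); apply HL.
    + apply hit_step_continuous; exact HL.
Qed.

End HittingProbabilities.

Fixpoint scale_sum (r : nat -> R) (j n : nat) : R :=
  match n with
  | O => 0
  | S m => scale_sum r j m + / r (j + m)%nat
  end.

Section Recurrence.

(* Recurrence criterion: r is a reciprocal scale function of the chain,
   i.e. p_i (h(i+1) - h(i)) = (1 - p_i) (h(i) - h(i-1)) forces the
   increments to be proportional to 1 / r, and sum 1 / r diverges. *)
Variables (p r : nat -> R) (j : nat).
Hypothesis p_pos : forall k, 0 < p (S k) <= 1.
Hypothesis r_pos : forall k, 0 < r k.
Hypothesis balance : forall k, (1 - p (S k)) * r (S k) = p (S k) * r k.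
Hypothesis scale_unbounded : forall M, exists n, M < scale_sum r j n.

Definition harmonic_off_target (G : nat -> R) : Prop :=
  G j = 1 /\ forall i, i <> j -> G i = hit_step p j G i.

Lemma harmonic_succ (G : nat -> R) (k : nat) :
  harmonic_off_target G -> S k <> j ->
  G (S k) = p (S k) * G (S (S k)) + (1 - p (S k)) * G k.
Proof.
  intros [Gj HG] Hk; rewrite (HG (S k) Hk) at 1; cbn [hit_step].
  rewrite !with_target_fixed by exact Gj; reflexivity.
Qed.

Lemma harmonic_flat_below (G : nat -> R) :
  harmonic_off_target G -> forall i, (i <= j)%nat -> G i = 1.
Proof.
  intros HG.
  assert (flat_step : forall i, (S i <= j)%nat -> G (S i) = G i).
  { induction i as [|i IH]; intros Hi.
    - destruct HG as [Gj HG']; rewrite (HG' 0%nat) by lia; cbn [hit_step].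
      rewrite with_target_fixed by exact Gj; reflexivity.
    - pose proof (harmonic_succ G i HG ltac:(lia)) as E.
      rewrite <- (IH ltac:(lia)) in E; pose proof (p_pos i).
      assert (Hz : p (S i) * (G (S (S i)) - G (S i)) = 0) by lra.
      apply Rmult_integral in Hz as [Hz | Hz]; lra. }
  assert (flat_down : forall m, (m <= j)%nat -> G (j - m)%nat = 1).
  { induction m as [|m IH]; intros Hm.
    - rewrite Nat.sub_0_r; apply HG.
    - rewrite <- flat_step by lia.
      replace (S (j - S m)) with (j - m)%nat by lia; apply IH; lia. }
  intros i Hi; replace i with (j - (j - i))%nat by lia; apply flat_down; lia.
Qed.

Lemma harmonic_scale_above (G : nat -> R) :
  harmonic_off_target G ->
  forall n, G (j + n)%nat = 1 + (G (S j) - 1) * r j * scale_sum r j n.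
Proof.
  intros HG.
  set (K := (G (S j) - 1) * r j).
  assert (increment : forall m, (G (S (j + m)) - G (j + m)%nat) * r (j + m)%nat = K).
  { induction m as [|m IH].
    - unfold K; rewrite Nat.add_0_r, (proj1 HG); reflexivity.
    - rewrite Nat.add_succ_r, <- IH.
      pose proof (harmonic_succ G (j + m) HG ltac:(lia)) as E.
      pose proof (balance (j + m)) as B; pose proof (p_pos (j + m)).
      apply (Rmult_eq_reg_l (p (S (j + m)))); [|lra].
      assert (E' : p (S (j + m)) * (G (S (S (j + m))) - G (S (j + m)))
                   = (1 - p (S (j + m))) * (G (S (j + m)) - G (j + m)%nat)) by lra.
      transitivity (p (S (j + m)) * (G (S (S (j + m))) - G (S (j + m))) * r (S (j + m)));
        [ring|].
      rewrite E'.
      transitivity ((1 - p (S (j + m))) * r (S (j + m)) * (G (S (j + m)) - G (j + m)%nat));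
        [ring|].
      rewrite B; ring. }
  induction n as [|n IH].
  - rewrite Nat.add_0_r, (proj1 HG); simpl; ring.
  - rewrite Nat.add_succ_r; simpl scale_sum.
    pose proof (increment n) as D; pose proof (r_pos (j + n)).
    replace (G (S (j + n))) with (G (j + n)%nat + K / r (j + n)%nat)
      by (rewrite <- D; field; lra).
    rewrite IH; fold K; field; lra.
Qed.

(* Divergence of the scale forces a bounded harmonic function to be flat. *)
Lemma harmonic_bounded_flat_above (G : nat -> R) :
  harmonic_off_target G -> (forall i, 0 <= G i <= 1) -> G (S j) = 1.
Proof.
  intros HG HB.
  set (K := (G (S j) - 1) * r j).
  pose proof (r_pos j).
  assert (K_nonpos : K <= 0) by (unfold K; pose proof (HB (S j)); nra).
  assert (K_zero : K = 0).
  { destruct (Rle_lt_or_eq_dec _ _ K_nonpos) as [K_neg | ]; auto; exfalso.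
    destruct (scale_unbounded (-1 / K)) as [n Hn].
    pose proof (HB (j + n)%nat) as [Hpos _].
    rewrite harmonic_scale_above in Hpos by exact HG; fold K in Hpos.
    assert (Hlt : K * scale_sum r j n < K * (-1 / K))
      by (apply Rmult_lt_gt_compat_neg_l; lra).
    replace (K * (-1 / K)) with (-1) in Hlt by (field; lra); lra. }
  unfold K in K_zero; apply Rmult_integral in K_zero as [|]; lra.
Qed.

Theorem return_certain : Un_cv (fun n => hit_within p j n j) 1.
Proof.
  assert (p_prob : forall k, 0 <= p (S k) <= 1) by (intros k; specialize (p_pos k); lra).
  destruct (hit_limit p j p_prob) as [L [HL [HB HE]]].
  set (G := with_target j L).
  assert (G_off : forall i, i <> j -> G i = L i) by (intros; apply with_target_off; auto).
  assert (HG : harmonic_off_target G).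
  { split; [unfold G, with_target; rewrite Nat.eqb_refl; reflexivity|].
    intros i Hi; rewrite G_off, HE by exact Hi.
    apply hit_step_ext; intros k Hk; symmetry; apply G_off; exact Hk. }
  assert (G_bounds : forall i, 0 <= G i <= 1).
  { intros i; unfold G, with_target; destruct (Nat.eqb i j); [lra | apply HB]. }
  assert (G_flat : forall k, (k <= S j)%nat -> G k = 1).
  { intros k Hk; destruct (Nat.eq_dec k (S j)) as [->|].
    - apply harmonic_bounded_flat_above; assumption.
    - apply harmonic_flat_below; [assumption | lia]. }
  assert (Lj : L j = 1).
  { rewrite HE, (hit_step_ext p j L G) by (intros; symmetry; auto).
    apply hit_step_ones; exact G_flat. }
  rewrite <- Lj; apply HL.
Qed.

End Recurrence.

Section Transience.

(* Transience criterion: a drift condition beyond the target making the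
   profile (j+2)/(i+2) excessive. *)
Variables (p : nat -> R) (j : nat).
Hypothesis p_pos : forall k, 0 < p (S k) <= 1.
Hypothesis drift : forall i, (j < i)%nat -> (1 - p i) * (INR i + 3) <= p i * (INR i + 1).

Definition inverse_profile (i : nat) : R :=
  if Nat.leb i j then 1 else (INR j + 2) / (INR i + 2).

Lemma inverse_profile_above (i : nat) :
  (j <= i)%nat -> inverse_profile i = (INR j + 2) / (INR i + 2).
Proof.
  intros Hi; unfold inverse_profile; destruct (Nat.leb_spec i j); auto.
  replace i with j by lia; pose proof (pos_INR j); field; lra.
Qed.

Lemma inverse_profile_bounds (i : nat) : 0 <= inverse_profile i <= 1.
Proof.
  unfold inverse_profile; destruct (Nat.leb_spec i j) as [|Hi]; [lra|].
  apply lt_INR in Hi; pose proof (pos_INR j).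
  split; [apply Rlt_le, Rdiv_lt_0_compat; lra|].
  apply (Rmult_le_reg_r (INR i + 2)); [lra|]; field_simplify; lra.
Qed.

Lemma inverse_profile_excessive (i : nat) :
  i <> j -> hit_step p j inverse_profile i <= inverse_profile i.
Proof.
  intros Hij.
  assert (p_prob : forall k, 0 <= p (S k) <= 1) by (intros k; specialize (p_pos k); lra).
  assert (at_target : inverse_profile j = 1)
    by (unfold inverse_profile; rewrite Nat.leb_refl; reflexivity).
  destruct (Nat.lt_ge_cases i j) as [Hlt | Hge].
  - unfold inverse_profile at 2; rewrite (proj2 (Nat.leb_le i j)) by lia.
    apply hit_step_bounds; [exact p_prob | exact inverse_profile_bounds].
  - destruct i as [|k]; [lia|]; cbn [hit_step].
    rewrite !with_target_fixed by exact at_target.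
    rewrite !inverse_profile_above by lia.
    pose proof (drift (S k) ltac:(lia)) as Hd; pose proof (p_pos k).
    rewrite !S_INR in *; pose proof (pos_INR k); pose proof (pos_INR j).
    set (q := p (S k)) in *; set (I := INR k) in *; set (J := INR j) in *.
    assert (E : (J + 2) / (I + 1 + 2)
                - (q * ((J + 2) / (I + 1 + 1 + 2)) + (1 - q) * ((J + 2) / (I + 2)))
                = (J + 2) * (2 * q * (I + 3) - (I + 4)) / ((I + 2) * (I + 3) * (I + 4)))
      by (field; lra).
    assert (0 <= (J + 2) * (2 * q * (I + 3) - (I + 4)) / ((I + 2) * (I + 3) * (I + 4))).
    { apply Rmult_le_pos; [apply Rmult_le_pos; lra|].
      apply Rlt_le, Rinv_0_lt_compat; repeat apply Rmult_lt_0_compat; lra. }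
    lra.
Qed.

Lemma inverse_profile_step_target : hit_step p j inverse_profile j < 1.
Proof.
  assert (at_target : inverse_profile j = 1)
    by (unfold inverse_profile; rewrite Nat.leb_refl; reflexivity).
  assert (Hgen : forall i, i = j -> hit_step p j inverse_profile i < 1).
  { intros [|k] Hi; cbn [hit_step]; rewrite !with_target_fixed by exact at_target.
    - rewrite inverse_profile_above by lia; rewrite <- Hi; simpl; lra.
    - unfold inverse_profile at 2; rewrite (proj2 (Nat.leb_le k j)) by lia.
      rewrite inverse_profile_above by lia; rewrite <- Hi, !S_INR.
      pose proof (p_pos k); pose proof (pos_INR k).
      assert ((INR k + 1 + 2) / (INR k + 1 + 1 + 2) < 1).
      { apply (Rmult_lt_reg_r (INR k + 1 + 1 + 2)); [lra|]; field_simplify; lra. }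
      nra. }
  apply Hgen; reflexivity.
Qed.

Theorem return_uncertain : exists l, l < 1 /\ Un_cv (fun n => hit_within p j n j) l.
Proof.
  assert (p_prob : forall k, 0 <= p (S k) <= 1) by (intros k; specialize (p_pos k); lra).
  destruct (growing_cv (fun n => hit_within p j n j)) as [l Hl].
  - intros n; apply hit_within_increasing; exact p_prob.
  - exists 1; intros x [n ->]; apply hit_within_bounds; exact p_prob.
  - exists l; split; auto.
    apply Rle_lt_trans with (hit_step p j inverse_profile j);
      [|exact inverse_profile_step_target].
    apply (@Rle_cv_lim (fun n => hit_within p j n j) (fun _ => hit_step p j inverse_profile j));
      auto using cv_const.
    intros n; apply excessive_bound; auto.
    + intros i; apply inverse_profile_bounds.
    + exact inverse_profile_excessive.
Qed.

End Transience.

Definition avoid_step {T : Type} (eqb : T -> T -> bool) (rates : T -> list (T * R))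
  (y x : T) (g : T -> R) : R :=
  fold_right (fun z acc => (if eqb z y then 0 else jump_prob eqb rates x z * g z) + acc) 0
    (map fst (rates x)).

(* Probability, from x, that the jump chain visits y at one of the times 1, ..., n+1. *)
Definition passage_partial_sum {T : Type} (eqb : T -> T -> bool)
  (rates : T -> list (T * R)) (y : T) (n : nat) (x : T) : R :=
  sum_f_R0 (fun m => first_passage eqb rates (S m) x y) n.

Section JumpChain.

Context {T : Type} (eqb : T -> T -> bool) (rates : T -> list (T * R)).

Lemma avoid_step_plus (y x : T) (g h : T -> R) :
  avoid_step eqb rates y x (fun z => g z + h z)
  = avoid_step eqb rates y x g + avoid_step eqb rates y x h.
Proof.
  unfold avoid_step; induction (map fst (rates x)) as [|a l IH]; simpl; [ring|].
  rewrite IH; destruct (eqb a y); ring.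
Qed.

Lemma avoid_step_zero (y x : T) : avoid_step eqb rates y x (fun _ => 0) = 0.
Proof.
  unfold avoid_step; induction (map fst (rates x)) as [|a l IH]; simpl; [ring|].
  rewrite IH; destruct (eqb a y); ring.
Qed.

Lemma passage_partial_sum_S (y : T) (n : nat) (x : T) :
  passage_partial_sum eqb rates y (S n) x
  = jump_prob eqb rates x y + avoid_step eqb rates y x (passage_partial_sum eqb rates y n).
Proof.
  revert x; induction n as [|n IH]; intros x; [reflexivity|].
  change (passage_partial_sum eqb rates y (S (S n)) x)
    with (passage_partial_sum eqb rates y (S n) x + first_passage eqb rates (S (S (S n))) x y).
  change (first_passage eqb rates (S (S (S n))) x y)
    with (avoid_step eqb rates y x (fun z => first_passage eqb rates (S (S n)) z y)).
  change (passage_partial_sum eqb rates y (S n))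
    with (fun z => passage_partial_sum eqb rates y n z + first_passage eqb rates (S (S n)) z y).
  rewrite IH, avoid_step_plus; ring.
Qed.

Lemma jump_step_single (x y u : T) (r : R) (g : T -> R) :
  rates x = [(u, r)] -> eqb u u = true ->
  jump_prob eqb rates x y + avoid_step eqb rates y x g
  = r / r * (if eqb u y then 1 else g u).
Proof.
  intros Hx Hu; unfold avoid_step, jump_prob, rate_to, total_rate; rewrite Hx; simpl.
  rewrite Hu; destruct (eqb u y); rewrite ?Rplus_0_r, ?Rplus_0_l; unfold Rdiv; ring.
Qed.

Lemma jump_step_pair (x y u d : T) (ru rd : R) (g : T -> R) :
  rates x = [(u, ru); (d, rd)] ->
  eqb u u = true -> eqb d d = true -> eqb u d = false -> eqb d u = false ->
  jump_prob eqb rates x y + avoid_step eqb rates y x g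
  = ru / (ru + rd) * (if eqb u y then 1 else g u)
    + rd / (ru + rd) * (if eqb d y then 1 else g d).
Proof.
  intros Hx Hu Hd Hud Hdu; unfold avoid_step, jump_prob, rate_to, total_rate.
  rewrite Hx; simpl; rewrite Hu, Hd, Hud, Hdu.
  destruct (eqb u y), (eqb d y); rewrite ?Rplus_0_r, ?Rplus_0_l; unfold Rdiv; ring.
Qed.

End JumpChain.

Section NearestNeighbourEncoding.

Context {T : Type} (eqb : T -> T -> bool) (rates : T -> list (T * R)).
Variables (enc : nat -> T) (up down : nat -> R).
Hypothesis enc_eqb : forall k l, eqb (enc k) (enc l) = Nat.eqb k l.
Hypothesis origin_rates : rates (enc 0%nat) = [(enc 1%nat, up 0%nat)].
Hypothesis origin_rate_nonzero : up 0%nat <> 0.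
Hypothesis succ_rates : forall k,
  rates (enc (S k)) = [(enc (S (S k)), up (S k)); (enc k, down (S k))] \/
  rates (enc (S k)) = [(enc k, down (S k)); (enc (S (S k)), up (S k))].
Hypothesis succ_total_pos : forall k, 0 < up (S k) + down (S k).

Definition up_prob (i : nat) : R := up i / (up i + down i).

Lemma encoded_step (i j : nat) (g : T -> R) :
  jump_prob eqb rates (enc i) (enc j) + avoid_step eqb rates (enc j) (enc i) g
  = hit_step up_prob j (fun k => g (enc k)) i.
Proof.
  destruct i as [|k].
  - rewrite (jump_step_single eqb rates _ _ _ _ g origin_rates) by
      (rewrite enc_eqb; apply Nat.eqb_refl).
    rewrite enc_eqb; cbn [hit_step]; unfold with_target.
    replace (up 0%nat / up 0%nat) with 1 by (field; exact origin_rate_nonzero); ring.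
  - assert (Hne : forall a b, a <> b -> eqb (enc a) (enc b) = false)
      by (intros a b Hab; rewrite enc_eqb; apply Nat.eqb_neq; exact Hab).
    assert (Hrefl : forall a, eqb (enc a) (enc a) = true)
      by (intros a; rewrite enc_eqb; apply Nat.eqb_refl).
    pose proof (succ_total_pos k).
    cbn [hit_step]; unfold with_target, up_prob; rewrite <- !enc_eqb.
    replace (1 - up (S k) / (up (S k) + down (S k)))
      with (down (S k) / (up (S k) + down (S k))) by (field; lra).
    destruct (succ_rates k) as [Hx | Hx].
    + rewrite (jump_step_pair eqb rates _ _ _ _ _ _ g Hx)
        by (apply Hrefl || (apply Hne; lia));
      reflexivity.
    + rewrite (jump_step_pair eqb rates _ _ _ _ _ _ g Hx)
        by (apply Hrefl || (apply Hne; lia)).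
      rewrite (Rplus_comm (down (S k))); ring.
Qed.

Lemma encoded_passage (j n i : nat) :
  passage_partial_sum eqb rates (enc j) n (enc i) = hit_within up_prob j (S n) i.
Proof.
  revert i; induction n as [|n IH]; intros i.
  - rewrite <- (Rplus_0_r (passage_partial_sum _ _ _ _ _)).
    rewrite <- (avoid_step_zero eqb rates (enc j) (enc i)).
    apply encoded_step.
  - rewrite passage_partial_sum_S, encoded_step, (hit_within_S _ _ (S n)).
    f_equal; apply functional_extensionality; exact IH.
Qed.

Lemma encoded_return_sums (j : nat) (l : R) :
  Un_cv (fun n => hit_within up_prob j n j) l ->
  infinite_sum (fun n => first_passage eqb rates (S n) (enc j) (enc j)) l.
Proof.
  intros Hcv.
  apply (Un_cv_ext (fun n => hit_within up_prob j (S n) j)).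
  - intros n; symmetry; apply encoded_passage.
  - apply (cv_succ (fun n => hit_within up_prob j n j)); exact Hcv.
Qed.

End NearestNeighbourEncoding.

Lemma ratio_bounds (u d : R) : 0 < u -> 0 <= d -> 0 < u / (u + d) <= 1.
Proof.
  intros Hu Hd; split; [apply Rdiv_lt_0_compat; lra|].
  apply (Rmult_le_reg_r (u + d)); [lra|]; field_simplify; lra.
Qed.

Lemma ratio_drift (u d x : R) :
  0 < u -> 0 <= d -> d * (x + 3) <= u * (x + 1) ->
  (1 - u / (u + d)) * (x + 3) <= u / (u + d) * (x + 1).
Proof.
  intros Hu Hd Hdrift.
  replace (1 - u / (u + d)) with (d / (u + d)) by (field; lra).
  replace (d / (u + d) * (x + 3)) with (d * (x + 3) * / (u + d)) by (unfold Rdiv; ring).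
  replace (u / (u + d) * (x + 1)) with (u * (x + 1) * / (u + d)) by (unfold Rdiv; ring).
  apply Rmult_le_compat_r; [apply Rlt_le, Rinv_0_lt_compat; lra | exact Hdrift].
Qed.

(* The scale of the birth-death process diverges: sum 1/(2i+1) ~ ln(i)/2. *)
Lemma ln_add_two (x : R) : 0 < x -> ln (x + 2) - ln x <= 2 / x.
Proof.
  intros Hx.
  assert (Ht : 0 < 2 / x) by (apply Rdiv_lt_0_compat; lra).
  replace (x + 2) with (x * (1 + 2 / x)) by (field; lra).
  rewrite ln_mult by lra.
  assert (ln (1 + 2 / x) < 2 / x).
  { rewrite <- (ln_exp (2 / x)) at 2; apply ln_increasing; [lra|].
    apply exp_ineq1; lra. }
  lra.
Qed.

Lemma odd_scale_sum_lower (j n : nat) :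
  ln (2 * INR (j + n) + 1) - ln (2 * INR j + 1)
  <= 2 * scale_sum (fun i => 2 * INR i + 1) j n.
Proof.
  induction n as [|n IH]; simpl scale_sum.
  - rewrite Nat.add_0_r; lra.
  - rewrite Nat.add_succ_r, S_INR; pose proof (pos_INR (j + n)).
    pose proof (ln_add_two (2 * INR (j + n) + 1) ltac:(lra)) as Hstep.
    replace (2 * (INR (j + n) + 1) + 1) with (2 * INR (j + n) + 1 + 2) by ring.
    unfold Rdiv in Hstep; lra.
Qed.

Lemma odd_scale_sum_unbounded (j : nat) (M : R) :
  exists n, M < scale_sum (fun i => 2 * INR i + 1) j n.
Proof.
  pose proof (pos_INR j).
  destruct (INR_unbounded (exp (2 * M + ln (2 * INR j + 1)))) as [n Hn].
  exists n; pose proof (odd_scale_sum_lower j n); pose proof (pos_INR n).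
  assert (Hln : ln (exp (2 * M + ln (2 * INR j + 1))) < ln (2 * INR (j + n) + 1)).
  { apply ln_increasing; [apply exp_pos|]; rewrite plus_INR; lra. }
  rewrite ln_exp in Hln; lra.
Qed.

Lemma bd_q_up (k : nat) : bd_q (S k) (S (S k)) = (2 * INR k + 3) / (4 * INR k + 4).
Proof.
  unfold bd_q; replace (S k + 1)%nat with (S (S k)) by lia; rewrite Nat.eqb_refl.
  rewrite S_INR; f_equal; ring.
Qed.

Lemma bd_q_down (k : nat) : bd_q (S k) k = (2 * INR k + 1) / (4 * INR k + 4).
Proof.
  unfold bd_q; rewrite (proj2 (Nat.eqb_neq k (S k + 1))) by lia.
  replace (S k - 1)%nat with k by lia; rewrite Nat.eqb_refl, S_INR.
  pose proof (pos_INR k); field; lra.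
Qed.

Lemma bd_q_up_antitone (a : nat) : bd_q (S a) (S (S a)) <= bd_q a (S a).
Proof.
  rewrite bd_q_up; destruct a as [|a].
  - simpl; lra.
  - rewrite bd_q_up, S_INR; pose proof (pos_INR a).
    apply (Rmult_le_reg_r ((4 * (INR a + 1) + 4) * (4 * INR a + 4))); [nra|].
    field_simplify; lra.
Qed.

Lemma bd_q_up_pos (a : nat) : 0 < bd_q a (S a).
Proof.
  destruct a as [|a]; [simpl; lra|].
  rewrite bd_q_up; pose proof (pos_INR a); apply Rdiv_lt_0_compat; lra.
Qed.

Lemma bd_q_down_nonneg (a : nat) : 0 <= bd_q a (pred a).
Proof.
  destruct a as [|a]; [simpl; lra|].
  cbn [pred]; rewrite bd_q_down; pose proof (pos_INR a).
  apply Rlt_le, Rdiv_lt_0_compat; lra.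
Qed.

Definition bd_up (i : nat) : R := bd_q i (S i).
Definition bd_down (i : nat) : R := bd_q i (pred i).

Lemma bd_up_prob_S (k : nat) :
  up_prob bd_up bd_down (S k) = (2 * INR k + 3) / (4 * INR k + 4).
Proof.
  unfold up_prob, bd_up, bd_down; cbn [pred]; rewrite bd_q_up, bd_q_down.
  pose proof (pos_INR k); field; lra.
Qed.

Lemma birth_death_recurrent (x : nat) :
  recurrent_state Nat.eqb (ctmc_rates bd_q bd_nb) x.
Proof.
  apply (encoded_return_sums Nat.eqb _ (fun k => k) bd_up bd_down);
    [reflexivity | reflexivity | unfold bd_up; simpl; lra | intros k; left; reflexivity | |].
  - intros k; pose proof (bd_q_up_pos (S k)); pose proof (bd_q_down_nonneg (S k)).
    unfold bd_up, bd_down; lra.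
  - apply return_certain with (r := fun i => 2 * INR i + 1).
    + intros k; apply ratio_bounds; [apply bd_q_up_pos | apply bd_q_down_nonneg].
    + intros k; pose proof (pos_INR k); lra.
    + intros k; rewrite bd_up_prob_S, S_INR; pose proof (pos_INR k); field; lra.
    + exact (odd_scale_sum_unbounded x).
Qed.

(* Enumeration of the spider configurations: 2a is (a, a+1), 2a+1 is (a, a+2). *)
Definition spider_conf (i : nat) : nat * nat := (Nat.div2 i, S (Nat.div2 (S i))).

Lemma spider_conf_even (a : nat) : spider_conf (2 * a) = (a, S a).
Proof. unfold spider_conf; rewrite Nat.div2_double, Nat.div2_succ_double; reflexivity. Qed.

Lemma spider_conf_odd (a : nat) : spider_conf (S (2 * a)) = (a, S (S a)).
Proof.
  unfold spider_conf; change (Nat.div2 (S (S (2 * a)))) with (S (Nat.div2 (2 * a))).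
  rewrite Nat.div2_succ_double, Nat.div2_double; reflexivity.
Qed.

Lemma div2_add_div2_succ (i : nat) : (Nat.div2 i + Nat.div2 (S i))%nat = i.
Proof.
  induction i as [|i IH]; [reflexivity|].
  change (Nat.div2 (S (S i))) with (S (Nat.div2 i)); lia.
Qed.

Lemma spider_conf_eqb (k l : nat) :
  pair_eqb (spider_conf k) (spider_conf l) = Nat.eqb k l.
Proof.
  unfold pair_eqb, spider_conf; cbn [fst snd].
  destruct (Nat.eqb_spec k l) as [-> | Hkl]; [rewrite !Nat.eqb_refl; reflexivity|].
  destruct (Nat.eqb_spec (Nat.div2 k) (Nat.div2 l)) as [Hd|]; [|reflexivity].
  destruct (Nat.eqb_spec (S (Nat.div2 (S k))) (S (Nat.div2 (S l)))) as [Hs|]; [|reflexivity].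
  pose proof (div2_add_div2_succ k); pose proof (div2_add_div2_succ l); lia.
Qed.

(* With gap 1 only the right leg can move up and the left leg down; with
   gap 2 the left leg moves up and the right leg down. *)
Definition spider_up_rate (c : nat * nat) : R :=
  let (a, b) := c in if Nat.eqb b (S a) then bd_q b (S b) else bd_q a (S a).

Definition spider_down_rate (c : nat * nat) : R :=
  let (a, b) := c in if Nat.eqb b (S a) then bd_q a (pred a) else bd_q b (pred b).

Lemma spider_rates_gap1 (a : nat) :
  spider_up_rate (a, S a) = bd_q (S a) (S (S a)) /\ spider_down_rate (a, S a) = bd_q a (pred a).
Proof. unfold spider_up_rate, spider_down_rate; rewrite Nat.eqb_refl; split; reflexivity. Qed.

Lemma spider_rates_gap2 (a : nat) :
  spider_up_rate (a, S (S a)) = bd_q a (S a) /\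
  spider_down_rate (a, S (S a)) = bd_q (S (S a)) (S a).
Proof.
  unfold spider_up_rate, spider_down_rate.
  rewrite (proj2 (Nat.eqb_neq (S (S a)) (S a))) by lia; split; reflexivity.
Qed.

Lemma spider_moves_gap1 (q : nat -> nat -> R) (a : nat) :
  spider_rates q (S a, S (S a)) =
  [((a, S (S a)), q (S a) a); ((S a, S (S (S a))), q (S (S a)) (S (S (S a))))].
Proof.
  unfold spider_rates, spider_cands, spider_conf_b; cbn [app filter fst].
  repeat match goal with |- context [Nat.eqb ?x ?y] => destruct (Nat.eqb_spec x y); try lia end.
  all: reflexivity.
Qed.

Lemma spider_moves_gap2 (q : nat -> nat -> R) (a : nat) :
  spider_rates q (a, S (S a)) = [((S a, S (S a)), q a (S a)); ((a, S a), q (S (S a)) (S a))].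
Proof.
  destruct a as [|a]; [reflexivity|].
  unfold spider_rates, spider_cands, spider_conf_b; cbn [app filter fst].
  repeat match goal with |- context [Nat.eqb ?x ?y] => destruct (Nat.eqb_spec x y); try lia end.
  all: reflexivity.
Qed.

Lemma spider_moves_succ (k : nat) :
  let c := spider_conf (S k) in
  spider_rates bd_q c
    = [(spider_conf (S (S k)), spider_up_rate c); (spider_conf k, spider_down_rate c)] \/
  spider_rates bd_q c
    = [(spider_conf k, spider_down_rate c); (spider_conf (S (S k)), spider_up_rate c)].
Proof.
  intros c; unfold c; destruct (Nat.Even_or_Odd k) as [[a ->] | [a ->]].
  - left; replace (S (S (2 * a))) with (2 * S a)%nat by lia.
    rewrite spider_conf_odd, !spider_conf_even, spider_moves_gap2.
    destruct (spider_rates_gap2 a) as [-> ->]; reflexivity.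
  - right; replace (S (2 * a + 1)) with (2 * S a)%nat by lia.
    replace (2 * a + 1)%nat with (S (2 * a)) by lia.
    rewrite spider_conf_even, !spider_conf_odd, spider_moves_gap1.
    destruct (spider_rates_gap1 (S a)) as [-> ->]; reflexivity.
Qed.

Definition spider_up (i : nat) : R := spider_up_rate (spider_conf i).
Definition spider_down (i : nat) : R := spider_down_rate (spider_conf i).

Lemma spider_rate_signs (i : nat) : 0 < spider_up i /\ 0 <= spider_down i.
Proof.
  unfold spider_up, spider_down; destruct (Nat.Even_or_Odd i) as [[a ->] | [a ->]].
  - rewrite spider_conf_even; destruct (spider_rates_gap1 a) as [-> ->].
    split; [apply bd_q_up_pos | apply bd_q_down_nonneg].
  - rewrite Nat.add_1_r, spider_conf_odd; destruct (spider_rates_gap2 a) as [-> ->].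
    split; [apply bd_q_up_pos | apply (bd_q_down_nonneg (S (S a)))].
Qed.

Lemma spider_drift (k : nat) :
  spider_down (S k) * (INR (S k) + 3) <= spider_up (S k) * (INR (S k) + 1).
Proof.
  unfold spider_up, spider_down; destruct (Nat.Even_or_Odd k) as [[a ->] | [a ->]].
  - rewrite spider_conf_odd; destruct (spider_rates_gap2 a) as [-> ->].
    replace (INR (S (2 * a))) with (2 * INR a + 1) by (rewrite S_INR, mult_INR; simpl; ring).
    pose proof (bd_q_up_antitone a) as Hanti; pose proof (pos_INR a).
    rewrite bd_q_up in Hanti; rewrite bd_q_down, S_INR.
    apply Rle_trans with ((2 * INR a + 3) / (4 * INR a + 4) * (2 * INR a + 1 + 1)).
    + right; field; lra.
    + apply Rmult_le_compat_r; lra.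
  - replace (S (2 * a + 1)) with (2 * S a)%nat by lia.
    rewrite spider_conf_even; destruct (spider_rates_gap1 (S a)) as [-> ->].
    cbn [pred]; rewrite bd_q_up, bd_q_down, mult_INR, !S_INR, INR_0.
    pose proof (pos_INR a).
    apply (Rmult_le_reg_r ((4 * (INR a + 1) + 4) * (4 * INR a + 4))); [nra|].
    field_simplify; nra.
Qed.

Lemma spider_transient (i : nat) :
  transient_state pair_eqb (spider_rates bd_q) (spider_conf i).
Proof.
  destruct (return_uncertain (up_prob spider_up spider_down) i) as [l [Hl Hcv]].
  - intros k; destruct (spider_rate_signs (S k)); apply ratio_bounds; assumption.
  - intros [|k] Hk; [lia|]; destruct (spider_rate_signs (S k)).
    apply ratio_drift; auto using spider_drift.
  - exists l; split; [exact Hl|].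
    apply (encoded_return_sums pair_eqb _ spider_conf spider_up spider_down);
      [exact spider_conf_eqb | reflexivity | | exact spider_moves_succ | | exact Hcv].
    + pose proof (spider_rate_signs 0); lra.
    + intros k; pose proof (spider_rate_signs (S k)); lra.
Qed.

Theorem mainTheorem7 :
  (forall x : nat, recurrent_state Nat.eqb (ctmc_rates bd_q bd_nb) x) /\
  (forall x : nat,
     transient_state pair_eqb (spider_rates bd_q) (x, S x) /\
     transient_state pair_eqb (spider_rates bd_q) (x, S (S x))).
Proof.
  split; [exact birth_death_recurrent|].
  intros x; rewrite <- spider_conf_even, <- spider_conf_odd.
  split; apply spider_transient.
Qed.
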